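(* There is no symmetric $2$-$(36,15,6)$ design admitting an automorphism of order two that fixes exactly $18$ points, and there is no symmetric $2$-$(36,15,6)$ design admitting an automorphism of order two that fixes exactly $14$ points. *)

From mathcomp Require Import all_boot all_fingroup.
Set Implicit Arguments. Unset Strict Implicit. Unset Printing Implicit Defensive.

Definition is_2design (T : finType) (v k lam : nat) (D : {set {set T}}) : Prop :=
  [/\ #|T| = v,
      (forall B, B \in D -> #|B| = k) &
      (forall x y : T, x != y ->
         #|[set B in D | (x \in B) && (y \in B)]| = lam)].

Definition symmetric_design (T : finType) (v k lam : nat) (D : {set {set T}}) : Prop :=
  is_2design v k lam D /\ #|D| = v.

Definition design_aut (T : finType) (D : {set {set T}}) (s : {perm T}) : Prop :=
  [set (s @: B) | B : {set T} in D] = D.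

Definition fixed_points (T : finType) (s : {perm T}) : {set T} := [set x | s x == x].

From mathcomp Require Import all_boot all_fingroup zify.
Set Implicit Arguments. Unset Strict Implicit. Unset Printing Implicit Defensive.

(* In a symmetric 2-(v,k,lam) design every point lies on k blocks and two
   distinct blocks meet in lam points; hence an automorphism fixes as many
   blocks as points.  Let s be an involutory automorphism and n = k - lam.
   For a moved point x exactly 2n blocks separate x from s x, and all of them
   are moved.  For a second moved orbit {y, s y}, comparing the pair counts of
   {x, y}, {s x, s y} with those of {x, s y}, {s x, y} shows that the blocks
   separating both orbits split evenly between the two possible patterns, and
   s pairs up the blocks of each pattern: their number is divisible by 4.
   Now let n be odd (n = 9 here).  If exactly 2n blocks are moved (18 fixed
   points), every moved block separates every moved orbit, so 4 divides 2n.
   If 2n + 4 blocks are moved (14 fixed points), exactly 4 moved blocks do not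
   separate {x, s x}; the divisibility forces each of the 2n + 2 other moved
   points to share exactly 2 of them, while each moved block leaves only 4
   moved points unseparated, so 2(2n + 2) <= 16. *)

Lemma const_of_sum_sqr (I : finType) (P : pred I) (a : I -> nat) c :
  \sum_(i | P i) 2 * (a i * c) = \sum_(i | P i) (a i ^ 2 + c ^ 2) ->
  forall i, P i -> a i = c.
Proof.
move=> /eqP; rewrite (leqif_sum (fun i _ => nat_Cauchy (a i) c)).
by move=> /forall_inP eq_ac i /eq_ac /eqP.
Qed.

Lemma even_card_involution (U : finType) (g : U -> U) (A : {set U}) :
  involutive g -> {in A, forall a, g a \in A} -> {in A, forall a, g a != a} ->
  ~~ odd #|A|.
Proof.
move=> gK gA g_neq; pose lt (a b : U) := (enum_rank a < enum_rank b : nat).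
have -> : #|A| = \sum_(a in A) lt a (g a) + \sum_(a in A) lt (g a) a.
  rewrite -sum1_card -big_split /=; apply: eq_bigr => a /g_neq.
  rewrite /lt -(inj_eq enum_rank_inj) -(inj_eq val_inj) eq_sym.
  by case: ltngtP.
have gA_eq a : (g a \in A) = (a \in A).
  by apply/idP/idP => [/gA|/gA//]; rewrite gK.
rewrite [X in _ + X](reindex_inj (inv_inj gK)) /=.
rewrite (eq_big (mem A) _ gA_eq (fun a _ => congr1 (lt^~ (g a)) (gK a))).
by rewrite addnn odd_double.
Qed.

Lemma mem_imset_involutive (U : finType) (f : U -> U) (A : {set U}) x :
  involutive f -> (x \in f @: A) = (f x \in A).
Proof. by move=> fK; rewrite -{1}(fK x) mem_imset //; exact: inv_inj fK. Qed.

Lemma imset_involutive (U : finType) (f : U -> U) :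
  involutive f -> involutive (fun A : {set U} => f @: A).
Proof. by move=> fK A; apply/setP => x; rewrite !mem_imset_involutive // fK. Qed.

Lemma nat_of_bool_add (a b : bool) : a + b = (a != b) + 2 * (a && b).
Proof. by case: a; case: b. Qed.

Lemma sum_nat_of_bool_gt0 (I : finType) (P : pred I) :
  0 < \sum_i (P i : nat) -> exists i, P i.
Proof. by rewrite lt0n sum_nat_eq0 => /forallPn [i]; rewrite eqb0 negbK; exists i. Qed.

Lemma card_sum_indicator (U : finType) (A : {pred U}) : #|A| = \sum_x (x \in A : nat).
Proof. by rewrite -sum1_card big_mkcond. Qed.

Section SymmetricDesign.

Variables (T : finType) (v k lam : nat) (D : {set {set T}}).
Hypotheses (design : symmetric_design v k lam D) (k_gt1 : 1 < k).

Lemma card_points : #|T| = v.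
Proof. by case: design => -[]. Qed.

Lemma card_blocks : #|D| = v.
Proof. by case: design. Qed.

Lemma block_size B : B \in D -> \sum_x (x \in B : nat) = k.
Proof. by case: design => -[_ kD _] _ /kD <-; rewrite card_sum_indicator. Qed.

Lemma pair_degree_neq x y : x != y ->
  \sum_(B in D) ((x \in B) && (y \in B) : nat) = lam.
Proof.
case: design => -[_ _ lamD] _ /lamD <-; rewrite card_sum_indicator big_mkcond /=.
by apply: eq_bigr => B _; rewrite inE; case: (B \in D).
Qed.

Lemma sum_neq_const (x : T) c : \sum_(y | y != x) c = (v - 1) * c.
Proof.
rewrite sum_nat_const -card_points subn1 -(cardC1 x).
by congr (#|_| * _); apply/eq_card => y; rewrite !inE.
Qed.

Lemma point_degree_eq x :
  (\sum_(B in D) (x \in B : nat)) * k = \sum_(B in D) (x \in B : nat) + (v - 1) * lam.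
Proof.
transitivity (\sum_y \sum_(B in D) ((x \in B) && (y \in B) : nat)).
  rewrite big_distrl exchange_big /=; apply: eq_bigr => B /block_size <-.
  by rewrite big_distrr /=; apply: eq_bigr => y _; case: (x \in B); rewrite ?mul1n ?mul0n.
rewrite (bigD1 x) //= -(sum_neq_const x); congr (_ + _).
  by apply: eq_bigr => B _; rewrite andbb.
by apply: eq_bigr => y; rewrite eq_sym => /pair_degree_neq.
Qed.

Lemma point_degree x : \sum_(B in D) (x \in B : nat) = k.
Proof.
pose r y := \sum_(B in D) (y \in B : nat).
have r_const y : r y = r x.
  have := point_degree_eq x; have := point_degree_eq y; rewrite -/(r x) -/(r y).
  nia.
have : \sum_y r y = \sum_(B in D) k.
  by rewrite exchange_big; apply: eq_bigr => B /block_size.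
rewrite (eq_bigr _ (fun y _ => r_const y)) !sum_nat_const card_blocks -card_points.
have T_gt0 : 0 < #|T| by apply/card_gt0P; exists x.
by move/eqP; rewrite eqn_pmul2l // => /eqP.
Qed.

Lemma pair_degree x y :
  \sum_(B in D) ((x \in B) && (y \in B) : nat) = if x == y then k else lam.
Proof.
case: eqVneq => [<-|/pair_degree_neq //].
by rewrite -(point_degree x); apply: eq_bigr => B _; rewrite andbb.
Qed.

(* The point [x] only rules out [T = set0], where the identity fails. *)
Lemma design_param_eq (x : T) : k * k = k + (v - 1) * lam.
Proof. by rewrite -{1 3}(point_degree x) point_degree_eq. Qed.

Definition meet (B0 B : {set T}) := \sum_x ((x \in B0) && (x \in B) : nat).

Lemma sum_meet B0 : B0 \in D -> \sum_(B in D) meet B0 B = k * k.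
Proof.
move=> B0D; rewrite exchange_big /= -{1}(block_size B0D) big_distrl /=.
apply: eq_bigr => x _; rewrite -(point_degree x) big_distrr /=.
by apply: eq_bigr => B _; case: (x \in B0); rewrite /= ?mul1n ?mul0n.
Qed.

Lemma sum_meet_sqr B0 : B0 \in D ->
  \sum_(B in D) meet B0 B ^ 2 = k * (k + (k - 1) * lam).
Proof.
move=> B0D.
transitivity (\sum_x \sum_y ((x \in B0) && (y \in B0)) * (if x == y then k else lam)).
  rewrite (eq_bigr _ (fun B _ => big_distrlr _ _ _ _ _ _ _)) exchange_big /=.
  apply: eq_bigr => x _; rewrite exchange_big /=; apply: eq_bigr => y _.
  rewrite -pair_degree big_distrr /=; apply: eq_bigr => B _.
  by case: (x \in B0); case: (x \in B); case: (y \in B0); case: (y \in B).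
rewrite -[X in _ = X * _](block_size B0D) big_distrl /=; apply: eq_bigr => x _.
case: (boolP (x \in B0)) => /= [xB0|_]; last by rewrite big1 // => y _; rewrite mul0n.
have inner_card : \sum_(y | y != x) (y \in B0 : nat) = k - 1.
  by rewrite -(block_size B0D) [in RHS](bigD1 x) //= xB0 add1n subn1.
rewrite mul1n (bigD1 x) //= eqxx xB0 mul1n; congr (_ + _).
rewrite -inner_card big_distrl /=; apply: eq_bigr => y; rewrite eq_sym => /negbTE ->.
by case: (y \in B0).
Qed.

Lemma meet_self B : B \in D -> meet B B = k.
Proof. by move=> /block_size <-; apply: eq_bigr => x _; rewrite andbb. Qed.

Lemma block_meet B0 B1 : B0 \in D -> B1 \in D -> B0 != B1 -> meet B0 B1 = lam.
Proof.
move=> B0D B1D B01.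
apply: (const_of_sum_sqr (P := fun B => (B \in D) && (B != B0))); last by rewrite B1D eq_sym.
have [x _] : exists x, x \in B0.
  by apply/card_gt0P; rewrite card_sum_indicator block_size // ltnW.
have := sum_meet B0D; have := sum_meet_sqr B0D; have := design_param_eq x.
rewrite !(bigD1 B0 B0D) /= meet_self // -big_distrr -big_distrl /= big_split /= sum_nat_const.
have -> : #|[pred B | (B \in D) && (B != B0)]| = v - 1.
  rewrite -card_blocks (cardD1 B0) B0D subn1 /=; congr (_.+1.-1); apply: eq_card => B.
  by rewrite !inE andbC.
set S1 := \sum_(B in D | B != B0) meet B0 B; set S2 := \sum_(B in D | B != B0) _ ^ 2.
nia.
Qed.

Variable s : {perm T}.
Hypotheses (lam_lt_k : lam < k) (sK : involutive s).
Hypothesis s_aut : forall B, B \in D -> s @: B \in D.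

Definition splits x (B : {set T}) := (x \in B) != (s x \in B).

Lemma splits_moved_point x B : splits x B -> s x != x.
Proof. by apply: contraL => /eqP sx; rewrite /splits sx eqxx. Qed.

Lemma splits_moved_block x B : splits x B -> s @: B != B.
Proof.
by apply: contraL => /eqP sB; rewrite /splits -(mem_imset_involutive _ _ sK) sB eqxx.
Qed.

Lemma fixed_blocks_eq_points :
  \sum_(B in D) (s @: B == B : nat) = \sum_x (s x == x : nat).
Proof.
have ifE (b : bool) : (if b then k else lam) = lam + (k - lam) * b.
  by case: b; rewrite ?muln1 ?muln0 ?addn0 // subnKC // ltnW.
have count_blocks :
    \sum_(B in D) meet B (s @: B) = v * lam + (k - lam) * \sum_(B in D) (s @: B == B : nat).
  rewrite (eq_bigr (fun B : {set T} => lam + (k - lam) * (s @: B == B))) => [|B BD].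
    by rewrite big_split /= sum_nat_const -big_distrr /= card_blocks.
  rewrite -ifE eq_sym; case: eqVneq => [<-|]; [exact: meet_self | exact: block_meet (s_aut BD)].
have count_points :
    \sum_(B in D) meet B (s @: B) = v * lam + (k - lam) * \sum_x (s x == x : nat).
  rewrite exchange_big /= (eq_bigr (fun x => lam + (k - lam) * (s x == x))) => [|x _].
    by rewrite big_split /= sum_nat_const card_points -big_distrr.
  rewrite -ifE eq_sym -pair_degree; apply: eq_bigr => B _.
  by rewrite mem_imset_involutive.
apply/eqP; rewrite -(@eqn_pmul2l (k - lam)) ?subn_gt0 // -(eqn_add2l (v * lam)).
by rewrite -count_blocks count_points.
Qed.

Lemma splits_count x : s x != x -> \sum_(B in D) (splits x B : nat) = 2 * (k - lam).
Proof.
move=> xm; have : \sum_(B in D) ((x \in B : nat) + (s x \in B : nat)) =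
    \sum_(B in D) ((splits x B : nat) + 2 * ((x \in B) && (s x \in B))).
  by apply: eq_bigr => B _; exact: nat_of_bool_add.
rewrite [LHS]big_split [RHS]big_split /= !point_degree // -big_distrr /=.
by rewrite pair_degree_neq 1?eq_sym //; lia.
Qed.

Lemma splits_block_count B : B \in D -> s @: B != B ->
  \sum_y (splits y B : nat) = 2 * (k - lam).
Proof.
move=> BD Bm; have : \sum_y ((y \in B : nat) + (y \in s @: B : nat)) =
    \sum_y ((splits y B : nat) + 2 * ((y \in B) && (y \in s @: B))).
  by apply: eq_bigr => y _; rewrite nat_of_bool_add [in X in _ != X]mem_imset_involutive.
rewrite [LHS]big_split [RHS]big_split /= block_size // block_size ?s_aut // -big_distrr /=.
have := block_meet BD (s_aut BD); rewrite eq_sym => /(_ Bm); rewrite /meet => ->.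
lia.
Qed.

Lemma moved_blocks_eq_points :
  \sum_(B in D) (s @: B != B : nat) = \sum_x (s x != x : nat).
Proof.
apply/eqP; rewrite -(eqn_add2r (\sum_x (s x == x : nat))) -{1}fixed_blocks_eq_points.
rewrite -!big_split /= (eq_bigr (fun _ => 1)) => [|B _]; last by case: eqP.
rewrite [X in _ == X](eq_bigr (fun _ => 1)) => [|x _]; last by case: eqP.
by rewrite !sum1_card card_blocks card_points.
Qed.

Lemma card_moved_other x : s x != x ->
  \sum_y ((s y != y) && (y \notin [set x; s x]) : nat) + 2 = \sum_y (s y != y : nat).
Proof.
move=> xm; have <- : #|[set x; s x]| = 2 by rewrite cards2 eq_sym xm.
rewrite card_sum_indicator -big_split /=; apply: eq_bigr => y _; rewrite !inE.
case: (eqVneq y x) => [->|_]; first by rewrite xm.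
case: (eqVneq y (s x)) => [->|_]; first by rewrite sK eq_sym xm.
by case: (s y != y).
Qed.

Definition moved_nonsplit y (B : {set T}) := (s @: B != B) && ~~ splits y B.

Lemma splits_incl_excl x y :
  \sum_(B in D) (moved_nonsplit x B && moved_nonsplit y B : nat)
    + \sum_(B in D) (splits x B : nat) + \sum_(B in D) (splits y B : nat)
  = \sum_(B in D) (s @: B != B : nat) + \sum_(B in D) (splits x B && splits y B : nat).
Proof.
rewrite -!big_split /=; apply: eq_bigr => B _; rewrite /moved_nonsplit.
case: (boolP (splits x B)) => [/splits_moved_block -> | _] /=.
  by case: (splits y B).
case: (boolP (splits y B)) => [/splits_moved_block -> | _] //=.
by case: (_ != _).
Qed.

Lemma four_dvd_common_splits x y : s x != x -> y \notin [set x; s x] ->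
  4 %| \sum_(B in D) (splits x B && splits y B : nat).
Proof.
move=> xm; rewrite !inE negb_or eq_sym [y == s x]eq_sym => /andP[xy sxy].
have xsy : x != s y by rewrite -{1}(sK x) (can_eq sK).
have sxsy : s x != s y by rewrite (can_eq sK).
pose same B := [&& splits x B, splits y B & (x \in B) == (y \in B)].
pose opp B := [&& splits x B, splits y B & (x \in B) != (y \in B)].
have same_opp : \sum_(B in D) (opp B : nat) = \sum_(B in D) (same B : nat).
  have : \sum_(B in D) (((x \in B) && (y \in B) : nat)
                        + ((s x \in B) && (s y \in B) : nat) + opp B)
       = \sum_(B in D) (((x \in B) && (s y \in B) : nat)
                        + ((s x \in B) && (y \in B) : nat) + same B).
    apply: eq_bigr => B _; rewrite /same /opp /splits.
    by case: (x \in B); case: (y \in B); case: (s x \in B); case: (s y \in B).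
  by rewrite !big_split /= !pair_degree_neq //; lia.
have same_even : ~~ odd (\sum_(B in D) (same B : nat)).
  have -> : \sum_(B in D) (same B : nat) = #|[set B in D | same B]|.
    rewrite -sum1_card big_mkcond [RHS]big_mkcond /=.
    by apply: eq_bigr => B _; rewrite inE; case: (B \in D).
  apply: (even_card_involution (imset_involutive sK)) => B; rewrite !inE => /andP[BD sameB].
    rewrite s_aut //=; move: sameB; rewrite /same /splits !mem_imset_involutive // !sK.
    by case: (x \in B); case: (y \in B); case: (s x \in B); case: (s y \in B).
  by case/and3P: sameB => /splits_moved_block.
have -> : \sum_(B in D) (splits x B && splits y B : nat)
          = \sum_(B in D) (same B : nat) + \sum_(B in D) (opp B : nat).
  rewrite -big_split; apply: eq_bigr => B _; rewrite /same /opp.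
  by case: (splits x B); case: (splits y B); case: (_ == _).
lia.
Qed.

Lemma nonsplit_moved_points B : B \in D -> s @: B != B ->
  \sum_y ((s y != y) && ~~ splits y B : nat) + 2 * (k - lam) = \sum_y (s y != y : nat).
Proof.
move=> BD Bm; rewrite -(splits_block_count BD Bm) -big_split; apply: eq_bigr => y _ /=.
by case: (boolP (splits y B)) => [/splits_moved_point -> | _]; rewrite ?andbT ?addn0.
Qed.

Lemma moved_points_neq_double :
  odd (k - lam) -> 1 < k - lam -> \sum_x (s x != x : nat) != 2 * (k - lam).
Proof.
move=> n_odd n_gt1; apply/eqP => moved_eq.
have [x xm] : exists x, s x != x by apply: sum_nat_of_bool_gt0; lia.
have := card_moved_other xm; rewrite moved_eq => others.
have [y /andP[ym yx]] : exists y, (s y != y) && (y \notin [set x; s x]).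
  by apply: sum_nat_of_bool_gt0; lia.
have common_le :
    \sum_(B in D) (splits x B && splits y B : nat) <= \sum_(B in D) (splits x B : nat).
  by apply: leq_sum => B _; case: (splits x B); rewrite /= ?leq_b1.
have := four_dvd_common_splits xm yx; have := splits_incl_excl x y.
rewrite moved_blocks_eq_points moved_eq (splits_count xm) (splits_count ym) in common_le *.
lia.
Qed.

Lemma moved_points_neq_double_add4 :
  odd (k - lam) -> 3 < k - lam -> \sum_x (s x != x : nat) != 2 * (k - lam) + 4.
Proof.
move=> n_odd n_gt3; apply/eqP => moved_eq.
have [x xm] : exists x, s x != x by apply: sum_nat_of_bool_gt0; lia.
pose other y := (s y != y) && (y \notin [set x; s x]).
have nonsplit_x : \sum_(B in D) (moved_nonsplit x B : nat) = 4.
  have := splits_incl_excl x x; under eq_bigr do rewrite andbb.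
  under [X in _ = _ + X]eq_bigr do rewrite andbb.
  by rewrite moved_blocks_eq_points moved_eq (splits_count xm); lia.
have common y : other y ->
    \sum_(B in D) (moved_nonsplit x B && moved_nonsplit y B : nat) = 2.
  case/andP=> ym yx.
  have common_le : \sum_(B in D) (moved_nonsplit x B && moved_nonsplit y B : nat) <= 4.
    rewrite -nonsplit_x; apply: leq_sum => B _.
    by case: (moved_nonsplit x B); rewrite /= ?leq_b1.
  have := four_dvd_common_splits xm yx; have := splits_incl_excl x y.
  rewrite moved_blocks_eq_points moved_eq (splits_count xm) (splits_count ym).
  lia.
have row B : B \in D -> moved_nonsplit x B ->
    \sum_y (other y && moved_nonsplit y B : nat) <= 4.
  move=> BD /andP[Bm _]; have := nonsplit_moved_points BD Bm; rewrite moved_eq => row_eq.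
  apply: (@leq_trans (\sum_y ((s y != y) && ~~ splits y B : nat))); last by lia.
  apply: leq_sum => y _; rewrite /other /moved_nonsplit Bm.
  by case: (s y != y); case: (splits y B); rewrite /= ?andbF ?leq_b1.
have : (\sum_y (other y : nat)) * 2 <= (\sum_(B in D) (moved_nonsplit x B : nat)) * 4.
  rewrite !big_distrl /=.
  apply: (@leq_trans (\sum_(B in D)
            \sum_y (moved_nonsplit x B && (other y && moved_nonsplit y B) : nat))).
    rewrite exchange_big /=; apply: eq_leq; apply: eq_bigr => y _.
    case: (boolP (other y)) => [/common <- | _]; last by rewrite mul0n big1 // => B; rewrite andbF.
    by rewrite mul1n; apply: eq_bigr => B _.
  apply: leq_sum => B BD; case: (boolP (moved_nonsplit x B)) => [mxB | _]; last by rewrite big1.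
  by rewrite mul1n (row B BD mxB).
have := card_moved_other xm; rewrite moved_eq nonsplit_x /other.
lia.
Qed.

End SymmetricDesign.

Lemma involutive_of_order2 (T : finType) (s : {perm T}) : #[s]%g = 2 -> involutive s.
Proof. by move=> s2 x; rewrite -permM -(expgS s 1) -s2 expg_order perm1. Qed.

Lemma design_aut_mem (T : finType) (D : {set {set T}}) (s : {perm T}) :
  design_aut D s -> forall B, B \in D -> s @: B \in D.
Proof. by move=> sD B BD; rewrite -sD imset_f. Qed.

Lemma card_fixed_points (T : finType) (s : {perm T}) :
  #|fixed_points s| + \sum_x (s x != x : nat) = #|T|.
Proof.
rewrite card_sum_indicator -big_split -sum1_card /=.
by apply: eq_bigr => x _; rewrite inE; case: (s x == x).
Qed.

Theorem mainTheorem2 :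
  (~ exists (D : {set {set 'I_36}}) (s : {perm 'I_36}),
       [/\ symmetric_design 36 15 6 D, design_aut D s, #[s]%g = 2
         & #|fixed_points s| = 18]) /\
  (~ exists (D : {set {set 'I_36}}) (s : {perm 'I_36}),
       [/\ symmetric_design 36 15 6 D, design_aut D s, #[s]%g = 2
         & #|fixed_points s| = 14]).
Proof.
suff fixed_neq D (s : {perm 'I_36}) :
    symmetric_design 36 15 6 D -> design_aut D s -> #[s]%g = 2 ->
    #|fixed_points s| != 18 /\ #|fixed_points s| != 14.
  by split=> -[D [s [design sD s2 fixed]]];
     have [] := fixed_neq D s design sD s2; rewrite fixed.
move=> design /design_aut_mem s_aut /involutive_of_order2 sK.
have := moved_points_neq_double design isT isT sK s_aut isT isT.
have := moved_points_neq_double_add4 design isT isT sK s_aut isT isT.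
have := card_fixed_points s; rewrite card_ord.
lia.
Qed.
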